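(* Let $X$ be a $\delta$-hyperbolic metric space. Then $\mathrm{E}(X)$ is $\delta$-hyperbolic as well. If, in addition, $X$ is geodesic, then every point of $\mathrm{E}(X)$ is within distance $\delta$ of $\mathrm{e}(X)$; if $X$ is discretely geodesic, then every point of $\mathrm{E}(X)$ is within distance $\delta+\frac12$ of $\mathrm{e}(X)$.
   Context: $X$ is $\delta$-hyperbolic ($\delta\ge0$) if $d(w,x)+d(y,z)\le\max\{d(w,y)+d(x,z),\,d(x,y)+d(w,z)\}+\delta$ for all $w,x,y,z\in X$. For a metric space $(X,d)$ let $\Delta(X)=\{f\colon X\to\mathbb{R}: f(x)+f(y)\ge d(x,y)\ \forall x,y\}$ with the pointwise order, $\mathrm{E}(X)$ the set of its minimal elements, metrized by $\|f-g\|_\infty=\sup_x|f(x)-g(x)|$, and $\mathrm{e}\colon X\to\mathrm{E}(X)$, $\mathrm{e}(y)=d(\cdot,y)$ (an isometric embedding). $X$ is discretely geodesic if $d$ is integer valued and any $x,y$ are joined by an isometric embedding $\gamma\colon\{0,\dots,d(x,y)\}\to X$ with $\gamma(0)=x,\gamma(d(x,y))=y$. *)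

From HB Require Import structures.
From mathcomp Require Import all_boot all_order all_algebra.
From mathcomp Require Import all_classical all_reals.
Set Implicit Arguments. Unset Strict Implicit. Unset Printing Implicit Defensive.
Import Order.TTheory GRing.Theory Num.Theory.
Local Open Scope ring_scope.
Local Open Scope classical_set_scope.

Section Defs.
Context {R : realType} {X : Type}.

Definition is_metric (d : X -> X -> R) : Prop :=
  [/\ forall x, d x x = 0,
      forall x y, d x y = 0 -> x = y,
      forall x y, d x y = d y x &
      forall x y z, d x z <= d x y + d y z].

Definition hyperbolic (dl : R) (d : X -> X -> R) : Prop :=
  forall w x y z,
    d w x + d y z <= Num.max (d w y + d x z) (d x y + d w z) + dl.

Definition in_Delta (d : X -> X -> R) (f : X -> R) : Prop :=
  forall x y, d x y <= f x + f y.

Definition in_E (d : X -> X -> R) (f : X -> R) : Prop :=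
  in_Delta d f /\
  forall g, in_Delta d g -> (forall x, g x <= f x) -> g = f.

Definition supdist (f g : X -> R) : R :=
  sup [set `|f x - g x| | x in [set: X]].

Definition emb (d : X -> X -> R) (y : X) : X -> R := fun x => d x y.

Definition geodesic (d : X -> X -> R) : Prop :=
  forall x y, exists gam : R -> X,
    [/\ gam 0 = x, gam (d x y) = y &
        forall s t, 0 <= s <= d x y -> 0 <= t <= d x y ->
          d (gam s) (gam t) = `|s - t| ].

Definition discretely_geodesic (d : X -> X -> R) : Prop :=
  (forall x y, exists n : nat, d x y = n%:R) /\
  forall x y (n : nat), d x y = n%:R ->
    exists gam : nat -> X,
      [/\ gam 0%N = x, gam n = y &
          forall i j : nat, (i <= n)%N -> (j <= n)%N ->
            d (gam i) (gam j) = `|i%:R - j%:R| ].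
End Defs.

(** Elements f of E(X) are 1-Lipschitz and extremal: for every x and eps > 0
    some y has f x + f y <= d x y + eps.  Consequently the sup-distance of two
    such functions is almost attained as d x y - f x - g y, and the
    four-point condition for E(X) is inherited from that of X at the almost
    optimal points.  For the second part fix x, pick y extremal for x, and let
    v lie on a geodesic from x to y at distance about f x from x; the
    four-point condition for v, z, x, y bounds f v by delta (plus the error
    eps, and plus 1/2 when distances along the geodesic must be integers),
    while ||f - e(v)|| <= f v. *)

From HB Require Import structures.
From mathcomp Require Import all_boot all_order all_algebra.
From mathcomp Require Import all_classical all_reals.
From mathcomp Require Import lra.
Import Order.TTheory GRing.Theory Num.Theory.
Local Open Scope ring_scope.
Local Open Scope classical_set_scope.

Lemma nat_round {R : realType} {r : R} : 0 <= r ->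
  exists k : nat, r - 2^-1 < k%:R <= r + 2^-1.
Proof.
move=> r0; exists (Num.truncn (r + 2^-1)).
have /andP[le_k lt_k] := truncn_itv (x := r + 2^-1) (ltac:(lra)).
rewrite -[X in _ < X]natr1 in lt_k; rewrite le_k andbT; lra.
Qed.

Section ExtremalFunctions.
Set Implicit Arguments.
Unset Strict Implicit.
Variables (R : realType) (X : Type) (d : X -> X -> R).
Hypothesis d_metric : is_metric d.

Lemma metric_refl x : d x x = 0. Proof. by case: d_metric. Qed.
Lemma metric_sym x y : d x y = d y x. Proof. by case: d_metric. Qed.
Lemma metric_triangle x y z : d x z <= d x y + d y z.
Proof. by case: d_metric. Qed.

Lemma metric_ge0 x y : 0 <= d x y.
Proof.
have := metric_triangle x y x; rewrite metric_refl (metric_sym y x); lra.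
Qed.

Lemma in_Delta_ge0 f x : in_Delta d f -> 0 <= f x.
Proof. by move=> /(_ x x); rewrite metric_refl; lra. Qed.

(* Otherwise lowering f at the single point x by eps/2 stays in Delta(X). *)
Lemma in_E_extremal f x e : in_E d f -> 0 < e ->
  exists y, f x + f y <= d x y + e.
Proof.
move=> [fD fmin] e0; apply: contrapT => no_y.
have gap y : d x y + e < f x + f y.
  by rewrite ltNge; apply/negP => le_fy; apply: no_y; exists y.
pose g z := if pselect (z = x) then f x - e / 2 else f z.
have gD : in_Delta d g.
  move=> z w; rewrite /g.
  case: (pselect (z = x)) => [zx|zx]; case: (pselect (w = x)) => [wx|wx] /=.
  - by subst z w; have := gap x; rewrite metric_refl; lra.
  - by subst z; have := gap w; lra.
  - by subst w; have := gap z; rewrite metric_sym; lra.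
  - exact: fD.
have gf z : g z <= f z by rewrite /g; case: pselect => //= ->; lra.
have /(congr1 (fun h => h x)) := fmin g gD gf.
by rewrite /g; case: pselect => //= _; lra.
Qed.

Lemma in_E_lipschitz f x z : in_E d f -> f x <= d x z + f z.
Proof.
move=> hf; apply/ler_addgt0Pr => e e0.
have [y hy] := in_E_extremal x hf e0.
have := metric_triangle x z y; have := hf.1 y z; rewrite (metric_sym y z); lra.
Qed.

Lemma in_E_le f v c : in_E d f -> (forall z, d v z <= f z + c) -> f v <= c.
Proof.
move=> hf le_c; apply/ler_addgt0Pr => e e0.
have [z hz] := in_E_extremal v hf e0; have := le_c z; lra.
Qed.

Lemma supdist_has_sup f g (x : X) : in_E d f -> in_E d g ->
  has_sup [set `|f y - g y| | y in [set: X]].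
Proof.
move=> hf hg; split; first by exists `|f x - g x|; exists x.
exists (f x + g x) => _ [y _ <-].
have := in_E_lipschitz y x hf; have := in_E_lipschitz y x hg.
have := hf.1 y x; have := hg.1 y x.
by rewrite ler_norml; lra.
Qed.

Lemma supdist_ge f g x y : in_E d f -> in_E d g ->
  d x y - f x - g y <= supdist f g.
Proof.
move=> hf hg; have le_sup : `|g x - f x| <= supdist f g.
  rewrite distrC; apply: sup_upper_bound (supdist_has_sup x hf hg) _ _.
  by exists x.
by apply: le_trans le_sup; apply: le_trans (ler_norm _); have := hg.1 x y; lra.
Qed.

Lemma supdist_approx f g e : inhabited X -> in_E d f -> in_E d g -> 0 < e ->
  exists x y, supdist f g <= d x y - f x - g y + e.
Proof.
move=> [x0] hf hg e0; have e2 : 0 < e / 2 by rewrite divr_gt0.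
have [_ [x _ <-] near_sup] := sup_adherent e2 (supdist_has_sup x0 hf hg).
rewrite -/(supdist f g) in near_sup.
case: (lerP (g x) (f x)) => [le_gf|lt_fg].
- rewrite ger0_norm ?subr_ge0 // in near_sup.
  have [y hy] := in_E_extremal x hf e2.
  by exists y, x; rewrite metric_sym; lra.
- rewrite ltr0_norm ?subr_lt0 // in near_sup.
  have [y hy] := in_E_extremal x hg e2.
  by exists x, y; lra.
Qed.

Lemma supdist_emb_le f x : in_E d f -> supdist f (emb d x) <= f x.
Proof.
move=> hf; apply: ge_sup; first by exists `|f x - d x x|; exists x.
move=> _ [y _ <-]; rewrite /emb.
have := in_E_lipschitz y x hf; have := hf.1 y x.
by rewrite ler_norml; lra.
Qed.

Lemma geodesic_between x y s : geodesic d -> 0 <= s <= d x y ->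
  exists v, d x v = s /\ d v y = d x y - s.
Proof.
move=> geo /andP[s0 s_le]; have [gam [gam0 gam1 gam_iso]] := geo x y.
exists (gam s); rewrite -{1}gam0 -{1}gam1 !gam_iso ?lexx ?metric_ge0 ?s0 //.
by rewrite sub0r normrN ger0_norm // distrC ger0_norm // subr_ge0.
Qed.

Lemma discretely_geodesic_between x y n i : discretely_geodesic d ->
  d x y = n%:R -> (i <= n)%N -> exists v, d x v = i%:R /\ d v y = n%:R - i%:R.
Proof.
move=> [_ dgeo] dxy le_in; have [gam [gam0 gamn gam_iso]] := dgeo x y n dxy.
exists (gam i); rewrite -{1}gam0 -{1}gamn !gam_iso //.
by rewrite sub0r normrN normr_nat distrC ger0_norm // subr_ge0 ler_nat.
Qed.

Section Hyperbolic.
Variable dl : R.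
Hypothesis d_hyp : hyperbolic dl d.

Lemma in_E_hyperbolic f g h k : inhabited X ->
  in_E d f -> in_E d g -> in_E d h -> in_E d k ->
  supdist f g + supdist h k <=
    Num.max (supdist f h + supdist g k) (supdist g h + supdist f k) + dl.
Proof.
move=> X0 hf hg hh hk; apply/ler_addgt0Pr => e e0.
have e2 : 0 < e / 2 by rewrite divr_gt0.
have [x [x' fg_le]] := supdist_approx X0 hf hg e2.
have [y [y' hk_le]] := supdist_approx X0 hh hk e2.
have := d_hyp x x' y y'.
have := supdist_ge x y hf hh; have := supdist_ge x' y' hg hk.
have := supdist_ge x' y hg hh; have := supdist_ge x y' hf hk.
case: (leP (supdist f h + supdist g k) (supdist g h + supdist f k));
case: (leP (d x y + d x' y') (d x' y + d x y')); lra.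
Qed.

Lemma in_E_le_between f x y v : in_E d f -> d x v + d v y = d x y ->
  f v <= Num.max (f x - d x v) (f y - d v y) + dl.
Proof.
move=> hf between; apply: in_E_le => // z.
have := d_hyp v z x y; rewrite (metric_sym v x).
have := hf.1 z x; have := hf.1 z y.
case: (leP (f x - d x v) (f y - d v y));
case: (leP (d x v + d z y) (d z x + d v y)); lra.
Qed.

Lemma supdist_emb_le_between f x y v c : in_E d f ->
  d x v + d v y = d x y -> f x - c <= d x v -> d x v + f y <= d x y + c ->
  supdist f (emb d v) <= dl + c.
Proof.
move=> hf between lo hi; apply: le_trans (supdist_emb_le v hf) _.
have := in_E_le_between hf between.
by case: (leP (f x - d x v) (f y - d v y)); lra.
Qed.

Lemma in_E_near_emb_geodesic f e : inhabited X -> geodesic d ->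
  in_E d f -> 0 < e -> exists v, supdist f (emb d v) <= dl + e.
Proof.
move=> [x] geo hf e0; have [y hy] := in_E_extremal x hf e0.
have fx0 := in_Delta_ge0 x hf.1; have fy0 := in_Delta_ge0 y hf.1.
have dxy0 := metric_ge0 x y.
pose s := Num.min (f x) (d x y).
have s_in : 0 <= s <= d x y.
  by rewrite /s; case: (leP (f x) (d x y)) => ?; apply/andP; split; lra.
have [v [xv vy]] := geodesic_between geo s_in.
exists v; apply: (supdist_emb_le_between (x := x) (y := y)) => //;
  rewrite xv ?vy /s; case: (leP (f x) (d x y)); lra.
Qed.

Lemma in_E_near_emb_discrete f e : inhabited X -> discretely_geodesic d ->
  in_E d f -> 0 < e -> exists v, supdist f (emb d v) <= dl + 2^-1 + e.
Proof.
move=> [x] dgeo hf e0; have [y hy] := in_E_extremal x hf e0.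
have fx0 := in_Delta_ge0 x hf.1; have fy0 := in_Delta_ge0 y hf.1.
have [n dxy] := dgeo.1 x y; rewrite dxy in hy.
have [k /andP[k_lo k_hi]] := nat_round fx0.
have [i [le_in i_lo i_hi]] : exists i,
    [/\ (i <= n)%N, f x - (2^-1 + e) <= i%:R & i%:R <= f x + 2^-1].
  case: (leqP k n) => [le_kn|lt_nk]; first by exists k; split=> //; lra.
  by exists n; split=> //; move: lt_nk; rewrite -(ltr_nat R); lra.
have [v [xv vy]] := discretely_geodesic_between dgeo dxy le_in.
exists v; rewrite -addrA; apply: (supdist_emb_le_between (x := x) (y := y)) => //;
  rewrite xv ?vy ?dxy; lra.
Qed.

End Hyperbolic.
End ExtremalFunctions.

Theorem proposition1p3 (R : realType) (X : Type) (d : X -> X -> R) (dl : R) :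
  inhabited X -> is_metric d -> 0 <= dl -> hyperbolic dl d ->
  [/\ (forall f g h k : X -> R, in_E d f -> in_E d g -> in_E d h -> in_E d k ->
         supdist f g + supdist h k <=
           Num.max (supdist f h + supdist g k) (supdist g h + supdist f k) + dl),
      (geodesic d -> forall f, in_E d f -> forall eps : R, 0 < eps ->
         exists x : X, supdist f (emb d x) <= dl + eps) &
      (discretely_geodesic d -> forall f, in_E d f -> forall eps : R, 0 < eps ->
         exists x : X, supdist f (emb d x) <= dl + 2^-1 + eps)].
Proof.
move=> X0 dm _ hyp; split.
- by move=> f g h k; apply: in_E_hyperbolic.
- by move=> geo f hf e; apply: in_E_near_emb_geodesic.
- by move=> dgeo f hf e; apply: in_E_near_emb_discrete.
Qed.
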